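(* For every integer $N \ge 4$ and every $\Omega \in [-\pi,\pi]$, with $W = 4$ and the window $\mathcal W^\star$ defined in the context, the captured energy fraction satisfies $$E_{4,N}(\delta) = \sum_{n\in\mathcal W^\star}|y_n|^2 \;\ge\; \frac{80}{9\pi^2} \approx 0.9006 > 0.9 .$$ (The value $80/(9\pi^2)$ is the minimum over $\delta\in[0,\tfrac12]$ of $\sum_{n\in\mathcal W^\star}\operatorname{sinc}^2(n-\nu)$, attained at $\delta = 1/2$.)
   Context: Steering vector $\mathbf a(\Omega) = [1, e^{j\Omega}, \dots, e^{j(N-1)\Omega}]^\top$. Dirichlet kernel $D_N(\omega) = \frac1N\sum_{n=0}^{N-1}e^{j\omega n}$. Normalized DFT coefficients $y_n = D_N(\Omega - 2\pi n/N)$ for integers $n$ (so $\sum_{n=0}^{N-1}|y_n|^2=1$). $\operatorname{sinc}(x)=\sin(\pi x)/(\pi x)$. Put $\nu = N\Omega/(2\pi)$, $n_0=\mathrm{round}(\nu)$, $\delta = |\nu-n_0|\in[0,1/2]$. For $W=4$ the window is $\mathcal W^\star = \{n_0-1, n_0, n_0+1, n_0+2\}$ if $\nu = n_0+\delta$ and $\mathcal W^\star = \{n_0-2,n_0-1,n_0,n_0+1\}$ if $\nu = n_0-\delta$ (bins taken modulo $N$). *)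

From Stdlib Require Import Reals ZArith List.
From Coquelicot Require Import Coquelicot.
Import ListNotations.
Open Scope R_scope.

Definition cexpj (t : R) : C := (cos t, sin t).

(* Dirichlet kernel D_N(w) = (1/N) sum_{n=0}^{N-1} e^{j w n}
   (Coquelicot's sum_n a m = a 0 + ... + a m). *)
Definition dirichlet (N : nat) (w : R) : C :=
  Cmult (/ INR N) (sum_n (fun k => cexpj (w * INR k)) (N - 1)).

Definition dft_coef (N : nat) (Omega : R) (n : Z) : C :=
  dirichlet N (Omega - 2 * PI * IZR n / INR N).

(* floor via Stdlib's up : up x - 1 <= x < up x *)
Definition Rfloor_Z (x : R) : Z := (up x - 1)%Z.

(* nu = N Omega / (2 pi);  n0 = round(nu) (ties rounded up) *)
Definition nu_of (N : nat) (Omega : R) : R := INR N * Omega / (2 * PI).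
Definition n0_of (N : nat) (Omega : R) : Z := Rfloor_Z (nu_of N Omega + /2).

(* Bins are integers; y_n is N-periodic in n,
   so taking them modulo N does not change the coefficients. *)
Definition window4 (N : nat) (Omega : R) : list Z :=
  let n0 := n0_of N Omega in
  if Rle_dec (IZR n0) (nu_of N Omega)
  then [(n0 - 1)%Z; n0; (n0 + 1)%Z; (n0 + 2)%Z]
  else [(n0 - 2)%Z; (n0 - 1)%Z; n0; (n0 + 1)%Z].

Definition energy4 (N : nat) (Omega : R) : R :=
  fold_right Rplus 0 (map (fun n => (Cmod (dft_coef N Omega n)) ^ 2) (window4 N Omega)).

(** By the geometric sum, |D_N(w)|^2 (2 - 2 cos w) = (2 - 2 cos (N w)) / N^2, and
    since 2 - 2 cos w <= w^2 this gives |y_n|^2 >= sinc^2 (nu - n).  Writing the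
    four window offsets as d, 1 - d, 1 + d, 2 - d (up to sign) with
    d = |nu - n0| in [0, 1/2], the captured energy is at least
    sin^2(pi d) / pi^2 * (1/d^2 + 1/(1-d)^2 + 1/(1+d)^2 + 1/(2-d)^2), whose minimum
    80 / (9 pi^2) is attained at d = 1/2.  The last bound is checked by Taylor
    bounds on sin near 0 and on cos near pi/2, reducing to polynomial inequalities. *)

From Stdlib Require Import Reals Lra Lia Psatz.
From Coquelicot Require Import Coquelicot.
Open Scope R_scope.

Lemma cexpj_add a b : Cmult (cexpj a) (cexpj b) = cexpj (a + b).
Proof.
  unfold cexpj, Cmult; simpl. rewrite cos_plus, sin_plus.
  apply injective_projections; simpl; ring.
Qed.

Lemma cexpj_geometric_sum (w : R) (m : nat) :
  Cmult (Cminus (cexpj w) 1) (sum_n (fun k => cexpj (w * INR k)) m)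
  = Cminus (cexpj (w * INR (S m))) 1.
Proof.
  induction m as [|m IH].
  - rewrite sum_O, Rmult_0_r, Rmult_1_r.
    unfold cexpj, Cminus, Cmult, Cplus, Copp, RtoC; simpl.
    rewrite cos_0, sin_0. apply injective_projections; simpl; ring.
  - rewrite sum_Sn. change (plus ?a ?b) with (Cplus a b).
    rewrite Cmult_plus_distr_l, IH.
    unfold Cminus. rewrite Cmult_plus_distr_r, cexpj_add.
    replace (w + w * INR (S m)) with (w * INR (S (S m))) by (rewrite !S_INR; ring).
    unfold Cplus, Copp, Cmult, RtoC; simpl.
    apply injective_projections; simpl; ring.
Qed.

Lemma Cmod_cexpj_sub_1_sqr a : Cmod (Cminus (cexpj a) 1) ^ 2 = 2 - 2 * cos a.
Proof.
  rewrite Cmod2_alt. unfold cexpj, Cminus, Cplus, Copp, RtoC, Re, Im; simpl.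
  pose proof (sin2_cos2 a) as H. unfold Rsqr in H. nra.
Qed.

Lemma dirichlet_sqr_mul (N : nat) (w : R) : (1 <= N)%nat ->
  Cmod (dirichlet N w) ^ 2 * (2 - 2 * cos w) = (2 - 2 * cos (w * INR N)) / INR N ^ 2.
Proof.
  intros HN. unfold dirichlet.
  pose proof (cexpj_geometric_sum w (N - 1)) as G.
  replace (S (N - 1)) with N in G by lia.
  assert (HNpos : 0 < INR N) by (apply lt_0_INR; lia).
  rewrite Cmod_mult, Cmod_inv, Cmod_R, Rabs_right;
    [| lra | intro Hc; apply RtoC_inj in Hc; lra].
  rewrite <- (Cmod_cexpj_sub_1_sqr w), <- Cmod_cexpj_sub_1_sqr, <- G, Cmod_mult.
  field. lra.
Qed.

Lemma sum_n_cexpj_0 (m : nat) : sum_n (fun k => cexpj (0 * INR k)) m = RtoC (INR (S m)).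
Proof.
  induction m as [|m IH].
  - rewrite sum_O. unfold cexpj, RtoC. rewrite Rmult_0_l, cos_0, sin_0. reflexivity.
  - rewrite sum_Sn, IH. change (plus ?a ?b) with (Cplus a b).
    rewrite (S_INR (S m)).
    unfold cexpj, RtoC, Cplus. rewrite Rmult_0_l, cos_0, sin_0.
    apply injective_projections; simpl; ring.
Qed.

Lemma Cmod_dirichlet_0 (N : nat) : (1 <= N)%nat -> Cmod (dirichlet N 0) = 1.
Proof.
  intros HN. assert (HNpos : 0 < INR N) by (apply lt_0_INR; lia).
  unfold dirichlet. rewrite sum_n_cexpj_0. replace (S (N - 1)) with N by lia.
  rewrite <- RtoC_inv, <- RtoC_mult, Cmod_R, Rinv_l by lra. apply Rabs_R1.
Qed.

Lemma sin_sqr_le x : sin x ^ 2 <= x ^ 2.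
Proof.
  assert (Hpos : forall y, 0 < y -> - y <= sin y <= y).
  { intros y Hy. pose proof (sin_lt_x y Hy). pose proof (SIN_bound y).
    destruct (Rle_dec y 1); [|lra].
    pose proof (sin_ge_0 y ltac:(lra) ltac:(pose proof PI2_3_2; lra)). lra. }
  destruct (Rtotal_order x 0) as [Hx | [-> | Hx]].
  - pose proof (Hpos (- x) ltac:(lra)) as H. rewrite sin_neg in H. nra.
  - rewrite sin_0. lra.
  - pose proof (Hpos x Hx). nra.
Qed.

Lemma two_sub_two_cos_le w : 2 - 2 * cos w <= w ^ 2.
Proof.
  replace w with (2 * (w / 2)) at 1 by field. rewrite cos_2a_sin.
  pose proof (sin_sqr_le (w / 2)). unfold Rsqr. simpl in *. nra.
Qed.

Definition sinc (x : R) : R :=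
  if Req_EM_T x 0 then 1 else sin (PI * x) / (PI * x).

Lemma sinc_opp x : sinc (- x) = sinc x.
Proof.
  unfold sinc. destruct (Req_EM_T x 0), (Req_EM_T (- x) 0); try lra.
  replace (PI * - x) with (- (PI * x)) by ring. rewrite sin_neg. field.
  pose proof PI_RGT_0. split; [lra | nra].
Qed.

Lemma dirichlet_sqr_ge_sinc_sqr (N : nat) (w : R) : (1 <= N)%nat ->
  sinc (INR N * w / (2 * PI)) ^ 2 <= Cmod (dirichlet N w) ^ 2.
Proof.
  intros HN. pose proof PI_RGT_0 as HPI.
  assert (HNpos : 0 < INR N) by (apply lt_0_INR; lia).
  set (x := INR N * w / (2 * PI)). unfold sinc.
  destruct (Req_EM_T x 0) as [Hx | Hx].
  - replace w with (x * (2 * PI) / INR N) by (unfold x; field; lra).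
    rewrite Hx, Rmult_0_l, Rdiv_0_l, Cmod_dirichlet_0 by exact HN. lra.
  - assert (Hw : w <> 0) by (intros ->; apply Hx; unfold x; field; lra).
    assert (Hcos : 2 - 2 * cos (w * INR N) = 4 * sin (PI * x) ^ 2).
    { replace (w * INR N) with (2 * (PI * x)) by (unfold x; field; lra).
      rewrite cos_2a_sin. unfold Rsqr. ring. }
    pose proof (dirichlet_sqr_mul N w HN) as E. rewrite Hcos in E.
    pose proof (two_sub_two_cos_le w).
    pose proof (pow2_ge_0 (Cmod (dirichlet N w))).
    replace ((sin (PI * x) / (PI * x)) ^ 2)
      with (4 * sin (PI * x) ^ 2 / INR N ^ 2 / w ^ 2)
      by (unfold x; field; repeat split; lra).
    rewrite <- E. apply Rle_div_l; [nra|]. nra.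
Qed.

Lemma dft_coef_sqr_ge_sinc_sqr (N : nat) (Omega : R) (n : Z) : (1 <= N)%nat ->
  sinc (nu_of N Omega - IZR n) ^ 2 <= Cmod (dft_coef N Omega n) ^ 2.
Proof.
  intros HN. assert (HNpos : 0 < INR N) by (apply lt_0_INR; lia).
  pose proof PI_RGT_0.
  replace (nu_of N Omega - IZR n)
    with (INR N * (Omega - 2 * PI * IZR n / INR N) / (2 * PI))
    by (unfold nu_of; field; lra).
  apply dirichlet_sqr_ge_sinc_sqr, HN.
Qed.

Lemma sin_ge_cubic x : 0 <= x <= PI -> x - x ^ 3 / 6 <= sin x.
Proof.
  intros [H0 H1]. pose proof (sin_bound x 0 H0 H1) as [H _].
  unfold sin_approx, sin_term in H. simpl in H. lra.
Qed.

Lemma cos_ge_quadratic x : - PI / 2 <= x <= PI / 2 -> 1 - x ^ 2 / 2 <= cos x.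
Proof.
  intros [H0 H1]. pose proof (cos_bound x 0 H0 H1) as [H _].
  unfold cos_approx, cos_term in H. simpl in H. lra.
Qed.

Lemma PI_bounds : 314 / 100 <= PI <= 315 / 100.
Proof.
  pose proof (PI_2_3_7_ineq 1) as [H1 H2].
  unfold tg_alt, PI_2_3_7_tg, Ratan_seq in H1, H2. simpl in H1, H2. lra.
Qed.

(* [t (1 - t/6)^2] is [(x - x^3/6)^2] at [t = x^2]. *)
Lemma sin_taylor_sqr_monotone s t : 0 <= s <= t -> t <= 2 ->
  s * (1 - s / 6) ^ 2 <= t * (1 - t / 6) ^ 2.
Proof.
  intros Hst Ht.
  assert (E : t * (1 - t / 6) ^ 2 - s * (1 - s / 6) ^ 2
    = (t - s) * (6 * (2 - t) + 6 * (2 - s) + (2 - t) ^ 2 + (2 - t) * (2 - s) + (2 - s) ^ 2) / 36)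
    by field.
  assert (0 <= (2 - t) * (2 - s)) by nra.
  assert (0 <= (t - s) * (6 * (2 - t) + 6 * (2 - s) + (2 - t) ^ 2 + (2 - t) * (2 - s) + (2 - s) ^ 2))
    by (apply Rmult_le_pos; nra).
  lra.
Qed.

Lemma pow_bounds (s h : R) (k : nat) : 0 <= s <= h -> 0 <= s ^ k <= h ^ k.
Proof. intros [H1 H2]. split; [apply pow_le | apply pow_incr]; lra. Qed.

(* A polynomial inequality of degree 10 on [0, h], expanded in [s]: bounding each
   power of [s] by [h^k] makes it linear in the powers. *)
Ltac poly_by_power_bounds Hs :=
  pose proof (pow_bounds _ _ 2 Hs); pose proof (pow_bounds _ _ 3 Hs);
  pose proof (pow_bounds _ _ 4 Hs); pose proof (pow_bounds _ _ 5 Hs);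
  pose proof (pow_bounds _ _ 6 Hs); pose proof (pow_bounds _ _ 7 Hs);
  pose proof (pow_bounds _ _ 8 Hs); pose proof (pow_bounds _ _ 9 Hs);
  pose proof (pow_bounds _ _ 10 Hs); ring_simplify; simpl in *; lra.

Definition window_inv_sqr_sum (d : R) : R :=
  / d ^ 2 + / (1 - d) ^ 2 + / (1 + d) ^ 2 + / (2 - d) ^ 2.

Lemma window_inv_sqr_sum_pos d : 0 < d < 1 -> 0 < window_inv_sqr_sum d.
Proof.
  intros Hd. unfold window_inv_sqr_sum.
  assert (Hinv : forall y, y <> 0 -> 0 < / y ^ 2)
    by (intros y Hy; apply Rinv_0_lt_compat, pow2_gt_0, Hy).
  pose proof (Hinv d ltac:(lra)). pose proof (Hinv (1 - d) ltac:(lra)).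
  pose proof (Hinv (1 + d) ltac:(lra)). pose proof (Hinv (2 - d) ltac:(lra)). lra.
Qed.

Lemma small_offset_poly_ineq d : 0 <= d <= 29 / 100 ->
  80 * ((1 - d) ^ 2 * (1 + d) ^ 2 * (2 - d) ^ 2)
  <= 9 * (985 / 100) * (1 - 985 / 600 * d ^ 2) ^ 2 *
     ((1 - d) ^ 2 * (1 + d) ^ 2 * (2 - d) ^ 2 + d ^ 2 * (1 + d) ^ 2 * (2 - d) ^ 2
      + d ^ 2 * (1 - d) ^ 2 * (2 - d) ^ 2 + d ^ 2 * (1 - d) ^ 2 * (1 + d) ^ 2).
Proof.
  intros Hd. destruct (Rle_dec d (15 / 100)).
  - assert (Hs : 0 <= d <= 15 / 100) by lra. poly_by_power_bounds Hs.
  - assert (Hs : 0 <= 29 / 100 - d <= 14 / 100) by lra.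
    replace d with (29 / 100 - (29 / 100 - d)) by ring.
    set (s := 29 / 100 - d) in Hs |- *. poly_by_power_bounds Hs.
Qed.

(* [985/100] is a rational lower bound for [PI^2]. *)
Lemma window_sum_ge_small d : 0 < d <= 29 / 100 ->
  80 / 9 <= 985 / 100 * d ^ 2 * (1 - 985 / 100 * d ^ 2 / 6) ^ 2 * window_inv_sqr_sum d.
Proof.
  intros Hd. pose proof (small_offset_poly_ineq d ltac:(lra)) as H.
  assert (Hden : 0 < (1 - d) ^ 2 * (1 + d) ^ 2 * (2 - d) ^ 2)
    by (apply Rmult_lt_0_compat; [apply Rmult_lt_0_compat|]; apply pow2_gt_0; lra).
  apply (Rmult_le_reg_r (9 * ((1 - d) ^ 2 * (1 + d) ^ 2 * (2 - d) ^ 2))); [lra|].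
  replace (985 / 100 * d ^ 2 * (1 - 985 / 100 * d ^ 2 / 6) ^ 2 * window_inv_sqr_sum d
           * (9 * ((1 - d) ^ 2 * (1 + d) ^ 2 * (2 - d) ^ 2)))
    with (9 * (985 / 100) * (1 - 985 / 600 * d ^ 2) ^ 2 *
      ((1 - d) ^ 2 * (1 + d) ^ 2 * (2 - d) ^ 2 + d ^ 2 * (1 + d) ^ 2 * (2 - d) ^ 2
       + d ^ 2 * (1 - d) ^ 2 * (2 - d) ^ 2 + d ^ 2 * (1 - d) ^ 2 * (1 + d) ^ 2))
    by (unfold window_inv_sqr_sum; field; lra).
  lra.
Qed.

Lemma sin_sqr_mul_window_sum_ge_small d : 0 < d <= 29 / 100 ->
  80 / 9 <= sin (PI * d) ^ 2 * window_inv_sqr_sum d.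
Proof.
  intros Hd. pose proof PI_bounds as HPI.
  set (x := PI * d).
  assert (Hx : 0 < x <= 1) by (unfold x; split; nra).
  assert (Hsin : x - x ^ 3 / 6 <= sin x) by (apply sin_ge_cubic; lra).
  assert (Hcubic : 0 <= x - x ^ 3 / 6) by nra.
  assert (Hsin2 : (PI ^ 2 * d ^ 2) * (1 - PI ^ 2 * d ^ 2 / 6) ^ 2 <= sin x ^ 2).
  { replace ((PI ^ 2 * d ^ 2) * (1 - PI ^ 2 * d ^ 2 / 6) ^ 2)
      with ((x - x ^ 3 / 6) ^ 2) by (unfold x; field). nra. }
  assert (Hq : 985 / 100 * d ^ 2 * (1 - 985 / 100 * d ^ 2 / 6) ^ 2
               <= (PI ^ 2 * d ^ 2) * (1 - PI ^ 2 * d ^ 2 / 6) ^ 2).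
  { assert (HPI2 : 985 / 100 <= PI ^ 2) by nra.
    assert (Hd2 : d ^ 2 <= 841 / 10000) by nra.
    apply sin_taylor_sqr_monotone; [split|]; nra. }
  pose proof (window_inv_sqr_sum_pos d ltac:(lra)).
  pose proof (window_sum_ge_small d Hd). nra.
Qed.

(* Near [d = 1/2] the offsets pair up as [1/2 -+ e] and [3/2 -+ e], so the window
   sum is rational in [u = (1 - 2d)^2 = 4 e^2]. *)
Lemma window_inv_sqr_sum_sym d : 0 < d < 1 ->
  window_inv_sqr_sum d * ((1 - (1 - 2 * d) ^ 2) ^ 2 * (9 - (1 - 2 * d) ^ 2) ^ 2)
  = 8 * (1 + (1 - 2 * d) ^ 2) * (9 - (1 - 2 * d) ^ 2) ^ 2
    + 8 * (9 + (1 - 2 * d) ^ 2) * (1 - (1 - 2 * d) ^ 2) ^ 2.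
Proof.
  intros Hd. unfold window_inv_sqr_sum. field. repeat split; lra.
Qed.

Lemma large_offset_poly_ineq u : 0 <= u <= 1764 / 10000 ->
  80 * (1 - u) ^ 2 * (9 - u) ^ 2
  <= 9 * (1 - 993 / 800 * u) ^ 2 * (8 * (1 + u) * (9 - u) ^ 2 + 8 * (9 + u) * (1 - u) ^ 2).
Proof. intros Hu. nra. Qed.

(* [993/100] is a rational upper bound for [PI^2]. *)
Lemma window_sum_ge_large d : 29 / 100 <= d <= 1 / 2 ->
  80 / 9 <= (1 - 993 / 800 * (1 - 2 * d) ^ 2) ^ 2 * window_inv_sqr_sum d.
Proof.
  intros Hd. pose proof (window_inv_sqr_sum_sym d ltac:(lra)) as E.
  set (u := (1 - 2 * d) ^ 2) in E |- *.
  assert (Hu : 0 <= u <= 1764 / 10000) by (unfold u; split; nra).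
  assert (Hden : 0 < (1 - u) ^ 2 * (9 - u) ^ 2)
    by (apply Rmult_lt_0_compat; apply pow2_gt_0; lra).
  pose proof (large_offset_poly_ineq u Hu).
  apply (Rmult_le_reg_r _ _ _ Hden). rewrite Rmult_assoc, E. lra.
Qed.

Lemma sin_sqr_mul_window_sum_ge_large d : 29 / 100 <= d <= 1 / 2 ->
  80 / 9 <= sin (PI * d) ^ 2 * window_inv_sqr_sum d.
Proof.
  intros Hd. pose proof PI_bounds as HPI.
  set (y := PI * (1 / 2 - d)).
  assert (Hsin : sin (PI * d) = cos y)
    by (rewrite <- sin_shift; f_equal; unfold y; field).
  assert (Hcos : 1 - y ^ 2 / 2 <= cos y) by (apply cos_ge_quadratic; unfold y; split; nra).
  assert (Hy : 1 - 993 / 800 * (1 - 2 * d) ^ 2 <= 1 - y ^ 2 / 2).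
  { replace (y ^ 2) with (PI ^ 2 * (1 - 2 * d) ^ 2 / 4) by (unfold y; field).
    assert (PI ^ 2 <= 993 / 100) by nra. pose proof (pow2_ge_0 (1 - 2 * d)). nra. }
  assert (Hpos : 0 <= 1 - 993 / 800 * (1 - 2 * d) ^ 2)
    by (assert ((1 - 2 * d) ^ 2 <= 1764 / 10000) by nra; lra).
  pose proof (window_inv_sqr_sum_pos d ltac:(lra)).
  eapply Rle_trans; [apply (window_sum_ge_large d Hd)|].
  rewrite Hsin. apply Rmult_le_compat_r; [lra|]. apply pow_incr. lra.
Qed.

Lemma sin_sqr_mul_window_sum_ge d : 0 < d <= 1 / 2 ->
  80 / 9 <= sin (PI * d) ^ 2 * window_inv_sqr_sum d.
Proof.
  intros Hd. destruct (Rle_dec d (29 / 100)).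
  - apply sin_sqr_mul_window_sum_ge_small; lra.
  - apply sin_sqr_mul_window_sum_ge_large; lra.
Qed.

Lemma sinc_sqr_eq x : x <> 0 -> sinc x ^ 2 = sin (PI * x) ^ 2 / PI ^ 2 * / x ^ 2.
Proof.
  intros Hx. pose proof PI_RGT_0. unfold sinc.
  destruct (Req_EM_T x 0); [contradiction|]. field. lra.
Qed.

Lemma sinc_window_sum_eq d : 0 < d < 1 ->
  sinc d ^ 2 + sinc (1 - d) ^ 2 + sinc (1 + d) ^ 2 + sinc (2 - d) ^ 2
  = sin (PI * d) ^ 2 / PI ^ 2 * window_inv_sqr_sum d.
Proof.
  intros Hd. rewrite !sinc_sqr_eq by lra.
  replace (PI * (1 - d)) with (PI - PI * d) by ring.
  replace (PI * (1 + d)) with (PI * d + PI) by ring.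
  replace (PI * (2 - d)) with ((PI - PI * d) + PI) by ring.
  rewrite !neg_sin, !sin_PI_x. unfold window_inv_sqr_sum.
  pose proof PI_RGT_0. field. repeat split; lra.
Qed.

Lemma sinc_window_sum_ge d : 0 <= d <= 1 / 2 ->
  80 / (9 * PI ^ 2) <= sinc d ^ 2 + sinc (1 - d) ^ 2 + sinc (1 + d) ^ 2 + sinc (2 - d) ^ 2.
Proof.
  intros Hd. pose proof PI_bounds as HPI.
  assert (HPI2 : 9 < PI ^ 2) by nra.
  destruct (Req_dec d 0) as [-> | Hd0].
  - unfold sinc at 1. destruct (Req_EM_T 0 0); [|contradiction].
    pose proof (pow2_ge_0 (sinc (1 - 0))). pose proof (pow2_ge_0 (sinc (1 + 0))).
    pose proof (pow2_ge_0 (sinc (2 - 0))).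
    assert (80 / (9 * PI ^ 2) <= 1) by (apply Rle_div_l; lra). lra.
  - rewrite sinc_window_sum_eq by lra.
    pose proof (sin_sqr_mul_window_sum_ge d ltac:(lra)).
    replace (sin (PI * d) ^ 2 / PI ^ 2 * window_inv_sqr_sum d)
      with (sin (PI * d) ^ 2 * window_inv_sqr_sum d / PI ^ 2) by (field; lra).
    replace (80 / (9 * PI ^ 2)) with (80 / 9 / PI ^ 2) by (field; lra).
    apply Rmult_le_compat_r; [apply Rlt_le, Rinv_0_lt_compat|]; lra.
Qed.

Lemma nu_sub_n0_bounds (N : nat) (Omega : R) :
  - 1 / 2 <= nu_of N Omega - IZR (n0_of N Omega) < 1 / 2.
Proof.
  unfold n0_of, Rfloor_Z. rewrite minus_IZR.
  destruct (archimed (nu_of N Omega + / 2)). lra.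
Qed.

Theorem mainTheorem2 (N : nat) (Omega : R) :
  (4 <= N)%nat -> -PI <= Omega <= PI ->
  energy4 N Omega >= 80 / (9 * PI ^ 2).
Proof.
  intros HN _. apply Rle_ge.
  pose proof (nu_sub_n0_bounds N Omega) as Hres.
  assert (Hcoef : forall n, sinc (nu_of N Omega - IZR n) ^ 2 <= Cmod (dft_coef N Omega n) ^ 2)
    by (intros n; apply dft_coef_sqr_ge_sinc_sqr; lia).
  unfold energy4, window4. set (n0 := n0_of N Omega) in *. set (nu := nu_of N Omega) in *.
  destruct (Rle_dec (IZR n0) nu); cbn [List.map List.fold_right].
  - pose proof (sinc_window_sum_ge (nu - IZR n0) ltac:(lra)).
    pose proof (Hcoef (n0 - 1)%Z). pose proof (Hcoef n0).
    pose proof (Hcoef (n0 + 1)%Z). pose proof (Hcoef (n0 + 2)%Z).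
    rewrite ?minus_IZR, ?plus_IZR in *.
    replace (nu - (IZR n0 + 1)) with (- (1 - (nu - IZR n0))) in * by ring.
    replace (nu - (IZR n0 + 2)) with (- (2 - (nu - IZR n0))) in * by ring.
    replace (nu - (IZR n0 - 1)) with (1 + (nu - IZR n0)) in * by ring.
    rewrite !sinc_opp in *. lra.
  - pose proof (sinc_window_sum_ge (IZR n0 - nu) ltac:(lra)).
    pose proof (Hcoef (n0 - 2)%Z). pose proof (Hcoef (n0 - 1)%Z).
    pose proof (Hcoef n0). pose proof (Hcoef (n0 + 1)%Z).
    rewrite ?minus_IZR, ?plus_IZR in *.
    replace (nu - (IZR n0 - 2)) with (2 - (IZR n0 - nu)) in * by ring.
    replace (nu - (IZR n0 - 1)) with (1 - (IZR n0 - nu)) in * by ring.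
    replace (nu - IZR n0) with (- (IZR n0 - nu)) in * by ring.
    replace (nu - (IZR n0 + 1)) with (- (1 + (IZR n0 - nu))) in * by ring.
    rewrite !sinc_opp in *. lra.
Qed.
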